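(* Let the system and the memory each be a classical bit, i.e. states are density operators diagonal in a fixed basis $\{|0\rangle,|1\rangle\}$ of $\mathbb{C}^2$, and let $U$ be a permutation of the four product basis states $|i\rangle\otimes|k\rangle$ ($i,k\in\{0,1\}$), regarded as a unitary on $\mathbb{C}^2\otimes\mathbb{C}^2$. Then the memory depth $\Delta_U$ of the memory channel generated by $U$ satisfies $\Delta_U\in\{0,1,\infty\}$.
   Context: A memory channel generated by a fixed unitary $U$ on system $\otimes$ memory acts as follows. The memory starts in a state $\xi_1$ and uncorrelated inputs $\varrho_1,\varrho_2,\dots$ are fed in successively. In the $j$th use the memory is in state $\xi_j$, the $j$th input is transformed by $\mathcal{E}_j[\varrho]=\mathrm{tr}_{\rm mem}[U(\varrho\otimes\xi_j)U^\dagger]$, and the memory is updated to $\xi_{j+1}=\mathrm{tr}_{\rm sys}[U(\varrho_j\otimes\xi_j)U^\dagger]$. The memory depth $\Delta_U$ is the smallest integer $\Delta\ge 0$ such that for every $n>\Delta$ the channel $\mathcal{E}_n$ is independent of the initial memory state $\xi_1$ and of the inputs $\varrho_j$ with $j<n-\Delta$, for all admissible choices of these; if no such $\Delta$ exists, $\Delta_U=\infty$. In the classical case all states $\xi_1,\varrho_j$ are diagonal (probability distributions). *)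

From HB Require Import structures.
From mathcomp Require Import all_boot all_order all_algebra all_fingroup.
Set Implicit Arguments. Unset Strict Implicit. Unset Printing Implicit Defensive.
Import Order.TTheory GRing.Theory Num.Theory.
Local Open Scope ring_scope.

(* A diagonal density operator on C^2 = a probability distribution on {0,1}. *)
Definition is_dist (R : realFieldType) (p : bool -> R) : Prop :=
  (forall b, 0 <= p b) /\ p false + p true = 1.

(* Output of the j-th use on input p when the memory is in state xi:
   tr_mem [U (p (x) xi) U^dag]  (U a permutation of basis states (i,k)). *)
Definition chan (R : realFieldType) (U : {perm bool * bool})
    (xi p : bool -> R) : bool -> R :=
  fun i' => \sum_(x : bool * bool | (U x).1 == i') p x.1 * xi x.2.

(* Memory update: tr_sys [U (p (x) xi) U^dag]. *)
Definition upd (R : realFieldType) (U : {perm bool * bool})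
    (p xi : bool -> R) : bool -> R :=
  fun k' => \sum_(x : bool * bool | (U x).2 == k') p x.1 * xi x.2.

(* memst U xi1 rho k = xi_{k+1}  (inputs rho j indexed from j = 1). *)
Fixpoint memst (R : realFieldType) (U : {perm bool * bool})
    (xi1 : bool -> R) (rho : nat -> bool -> R) (k : nat) : bool -> R :=
  match k with
  | 0 => xi1
  | k'.+1 => upd U (rho k) (memst U xi1 rho k')
  end.

Definition En (R : realFieldType) (U : {perm bool * bool})
    (xi1 : bool -> R) (rho : nat -> bool -> R) (n : nat) : (bool -> R) -> bool -> R :=
  chan U (memst U xi1 rho n.-1).

Definition depth_ok (R : realFieldType) (U : {perm bool * bool}) (D : nat) : Prop :=
  forall n : nat, (D < n)%N ->
  forall (xi1 xi1' : bool -> R) (rho rho' : nat -> bool -> R),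
    is_dist xi1 -> is_dist xi1' ->
    (forall j, is_dist (rho j)) -> (forall j, is_dist (rho' j)) ->
    (forall j : nat, (n - D <= j)%N -> (j < n)%N -> rho j = rho' j) ->
    forall p : bool -> R, is_dist p ->
      forall b, En U xi1 rho n p b = En U xi1' rho' n p b.

(* Delta_U = d, with d = None encoding infinity. *)
Definition IsMemoryDepth (R : realFieldType) (U : {perm bool * bool})
    (d : option nat) : Prop :=
  match d with
  | Some D => depth_ok R U D /\ (forall D', depth_ok R U D' -> (D <= D')%N)
  | None => forall D, ~ depth_ok R U D
  end.

From mathcomp Require Import all_boot all_order all_algebra all_fingroup zify.
From Stdlib Require Import Classical FunctionalExtensionality.
Set Implicit Arguments. Unset Strict Implicit. Unset Printing Implicit Defensive.
Import Order.TTheory GRing.Theory Num.Theory.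
Local Open Scope ring_scope.

(* A map bool -> bool is either constant or a bijection, so each input bit i
   either ignores the memory bit or transmits it faithfully, both in the output
   bit (U (i, k)).1 and in the new memory bit (U (i, k)).2.  If every output
   ignores the memory, E_n never depends on it: depth 0.  If every memory update ignores
   the old memory, xi_n depends only on rho_(n-1): depth at most 1.  Otherwise
   some input i0 transmits the memory bit to the next memory and some input i1
   transmits it to the output; feeding i0 forever to two distinct initial point
   masses keeps their memories distinct forever, and probing with i1 at any time
   tells them apart: no finite depth. *)

Lemma iter_injective (T : Type) (h : T -> T) (m : nat) :
  injective h -> injective (iter m h).
Proof. by move=> h_inj; elim: m => //= m IH x y /h_inj /IH. Qed.

Lemma bool_injective (g : bool -> bool) : g false != g true -> injective g.
Proof. by move=> g_neq [] [] // E; move: g_neq; rewrite E eqxx. Qed.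

Section BitMarginals.

Variable R : realFieldType.
Implicit Types (p xi : bool -> R) (f : bool * bool -> bool).

Lemma sum_pair_bool (F : bool * bool -> R) :
  \sum_(x : bool * bool) F x = \sum_(i : bool) \sum_(k : bool) F (i, k).
Proof. by rewrite pair_big; apply: eq_bigr => -[]. Qed.

Lemma is_distE p : is_dist p <-> (forall b, 0 <= p b) /\ \sum_b p b = 1.
Proof. by rewrite /is_dist big_bool addrC. Qed.

Definition marginal f p xi : bool -> R :=
  fun b => \sum_(x | f x == b) p x.1 * xi x.2.

Lemma marginal_dist f p xi : is_dist p -> is_dist xi -> is_dist (marginal f p xi).
Proof.
move=> /is_distE[p_ge0 p_sum] /is_distE[xi_ge0 xi_sum]; apply/is_distE; split.
  by move=> b; apply: sumr_ge0 => x _; rewrite mulr_ge0.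
have -> : \sum_b marginal f p xi b = \sum_x p x.1 * xi x.2.
  by rewrite (partition_big f xpredT).
rewrite sum_pair_bool -p_sum; apply: eq_bigr => i _.
by rewrite (eq_bigr (fun k => p i * xi k)) // -mulr_sumr xi_sum mulr1.
Qed.

Lemma marginal_memoryless f p xi xi' :
  (forall i, f (i, false) = f (i, true)) -> is_dist xi -> is_dist xi' ->
  marginal f p xi = marginal f p xi'.
Proof.
move=> f_const.
suff marginalE xi0 :
    is_dist xi0 -> marginal f p xi0 =1 fun b => \sum_(i | f (i, false) == b) p i.
  move=> /marginalE xiE /marginalE xi'E.
  by apply: functional_extensionality => b; rewrite xiE xi'E.
move=> [_ xi0_sum] b; rewrite /marginal big_mkcond sum_pair_bool [RHS]big_mkcond.
apply: eq_bigr => i _; rewrite big_bool /= -f_const.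
by case: (f (i, false) == b); rewrite ?addr0 // -mulrDr addrC xi0_sum mulr1.
Qed.

Definition point_mass (a : bool) : bool -> R := fun b => (a == b)%:R.

Lemma point_mass_dist a : is_dist (point_mass a).
Proof.
by split=> [b|]; [exact: ler0n | case: a; rewrite /point_mass /= (add0r, addr0)].
Qed.

Lemma point_mass_inj a a' : point_mass a a = point_mass a' a -> a = a'.
Proof. by rewrite /point_mass eqxx eq_sym; case: eqP => // _ /eqP; rewrite oner_eq0. Qed.

Lemma marginal_point_mass f i k :
  marginal f (point_mass i) (point_mass k) = point_mass (f (i, k)).
Proof.
apply: functional_extensionality => b.
have massE x : point_mass i x.1 * point_mass k x.2 = ((i, k) == x)%:R.
  by rewrite -natrM mulnb.
rewrite /marginal (eq_bigr _ (fun x _ => massE x)) big_mkcond (bigD1 (i, k)) //=.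
rewrite eqxx big1 => [|x]; last by rewrite eq_sym => /negbTE ->; rewrite /= if_same.
by rewrite /point_mass; case: (f (i, k) == b); rewrite addr0.
Qed.

End BitMarginals.

Section MemoryChannel.

Variables (R : realFieldType) (U : {perm bool * bool}).

Lemma chanE (xi p : bool -> R) : chan U xi p = marginal (fun x => (U x).1) p xi.
Proof. by []. Qed.

Lemma updE (p xi : bool -> R) : upd U p xi = marginal (fun x => (U x).2) p xi.
Proof. by []. Qed.

Lemma memst_dist (xi1 : bool -> R) rho k :
  is_dist xi1 -> (forall j, is_dist (rho j)) -> is_dist (memst U xi1 rho k).
Proof.
by move=> xi1_dist rho_dist; elim: k => //= k IH; rewrite updE; exact: marginal_dist.
Qed.

Lemma output_memoryless_depth_ok D :
  (forall i, (U (i, false)).1 = (U (i, true)).1) -> depth_ok R U D.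
Proof.
move=> out_const n _ xi1 xi1' rho rho' xi1_dist xi1'_dist rho_dist rho'_dist _ p _ b.
by rewrite /En !chanE (marginal_memoryless (f := fun x => (U x).1) _ out_const
  (memst_dist n.-1 xi1_dist rho_dist) (memst_dist n.-1 xi1'_dist rho'_dist)).
Qed.

Lemma update_memoryless_depth_ok D :
  (forall i, (U (i, false)).2 = (U (i, true)).2) -> (0 < D)%N -> depth_ok R U D.
Proof.
move=> upd_const D_gt0 [|[|n]] D_lt // xi1 xi1' rho rho' xi1_dist xi1'_dist
  rho_dist rho'_dist rho_eq p _ b; first by have := leq_ltn_trans D_gt0 D_lt.
rewrite /En /= (rho_eq n.+1); [|lia|lia].
by rewrite !updE (marginal_memoryless (f := fun x => (U x).2) _ upd_const
  (memst_dist n xi1_dist rho_dist) (memst_dist n xi1'_dist rho'_dist)).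
Qed.

Lemma memory_transmitted_no_depth i0 i1 D :
  (U (i0, false)).2 != (U (i0, true)).2 -> (U (i1, false)).1 != (U (i1, true)).1 ->
  ~ depth_ok R U D.
Proof.
move=> h_neq g_neq okD; pose h k := (U (i0, k)).2; pose g k := (U (i1, k)).1.
have h_inj : injective h := bool_injective h_neq.
have g_inj : injective g := bool_injective g_neq.
have memE k m :
    memst U (point_mass R k) (fun=> point_mass R i0) m = point_mass R (iter m h k).
  by elim: m => //= m IH; rewrite IH updE marginal_point_mass.
have := okD D.+1 (ltnSn D) _ _ _ _ (point_mass_dist R false) (point_mass_dist R true)
  (fun=> point_mass_dist R i0) (fun=> point_mass_dist R i0) (fun _ _ _ => erefl)
  _ (point_mass_dist R i1) (g (iter D h false)).
rewrite /En /= !memE !chanE !marginal_point_mass => /point_mass_inj.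
by move/g_inj/(iter_injective h_inj).
Qed.

Lemma depth_ok1_or_infinite : depth_ok R U 1 \/ forall D, ~ depth_ok R U D.
Proof.
have [/forallP out_const|] := boolP [forall i, (U (i, false)).1 == (U (i, true)).1].
  by left; apply: output_memoryless_depth_ok => i; apply/eqP.
have [/forallP upd_const _|] := boolP [forall i, (U (i, false)).2 == (U (i, true)).2].
  by left; apply: update_memoryless_depth_ok => // i; apply/eqP.
move=> /forallPn[i0 upd_i0] /forallPn[i1 out_i1]; right => D.
exact: memory_transmitted_no_depth upd_i0 out_i1.
Qed.

End MemoryChannel.

Theorem mainTheorem2 (R : realFieldType) (U : {perm bool * bool}) :
  (exists d : option nat, IsMemoryDepth R U d) /\
  (forall d : option nat, IsMemoryDepth R U d ->
     d = Some 0%N \/ d = Some 1%N \/ d = None).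
Proof.
have [ok1 | never_ok] := depth_ok1_or_infinite R U; last first.
  split; first by exists None.
  by case=> [D [/never_ok]|] //; right; right.
split.
  have [ok0 | not_ok0] := classic (depth_ok R U 0).
    by exists (Some 0%N); split.
  by exists (Some 1%N); split=> // -[/not_ok0|].
case=> [D [_ minD]|]; last by right; right.
by case: D minD => [|[|D]] minD; [left | right; left | have := minD 1%N ok1].
Qed.
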